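(* Let $\Gamma_1=(V_1,W_1,E_1)$ and $\Gamma_2=(V_2,W_2,E_2)$ be bipartite graphs, and let $\mathcal{E}_1\subseteq V_1\times W_1\times\mathcal{S}$ and $\mathcal{E}_2\subseteq V_2\times W_2\times\mathcal{S}$ be strong edge colorings of $\Gamma_1$ and $\Gamma_2$ respectively, with colors from the same set $\mathcal{S}$. Define $V=W_1$, $W=\{(x,u)\in V_1\times V_2 : (x,y,s)\in\mathcal{E}_1 \text{ and } (u,v,s)\in\mathcal{E}_2 \text{ for some } y\in W_1, v\in W_2, s\in\mathcal{S}\}$, $E=\{(y,(x,u))\in V\times W : (x,y,s)\in\mathcal{E}_1 \text{ and } (u,v,s)\in\mathcal{E}_2 \text{ for some } s\in\mathcal{S}, v\in W_2\}$. Then $\Gamma=(V,W,E)$ is bipartite and $$\mathcal{E}=\{(y,(x,u),(s,v)) : (x,y,s)\in\mathcal{E}_1 \text{ and } (u,v,s)\in\mathcal{E}_2\}$$ is a strong edge coloring of $\Gamma$ with colors from $\Sigma=\{(s,v)\in\mathcal{S}\times W_2 : (u,v,s)\in\mathcal{E}_2 \text{ for some } u\in V_2\}$.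
   Context: A bipartite graph is written $(V_1,W_1,E)$ with $V_1\cap W_1=\emptyset$ and $E\subseteq V_1\times W_1$. An edge coloring of it with colors from $\mathcal{S}$ is written as a triple system $\{(v,w,s)\}$ in which each edge $(v,w)\in E$ occurs with exactly one color $s$, each color of $\mathcal{S}$ is used, and two edges sharing a vertex get different colors. It is a strong edge coloring if moreover no two distinct edges of the same color are both adjacent to (share a vertex with) a common edge; equivalently, if $(v,w,s),(v',w',s)$ are distinct colored edges then $v\ne v'$, $w\neq w'$, and neither $(v,w')$ nor $(v',w)$ is an edge. *)

Set Implicit Arguments.

(* A bipartite graph (V, W, E): V and W are subsets of two distinct carrier
   types (so V ∩ W = ∅ holds by typing), and E ⊆ V × W. *)
Definition is_bipartite (A B : Type) (V : A -> Prop) (W : B -> Prop)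
  (E : A -> B -> Prop) : Prop :=
  forall v w, E v w -> V v /\ W w.

Definition is_edge_coloring (A B S : Type) (V : A -> Prop) (W : B -> Prop)
  (E : A -> B -> Prop) (Sc : S -> Prop) (C : A -> B -> S -> Prop) : Prop :=
  (forall v w s, C v w s -> E v w /\ Sc s) /\
  (forall v w, E v w -> exists s, C v w s) /\
  (forall v w s s', C v w s -> C v w s' -> s = s') /\
  (forall s, Sc s -> exists v w, C v w s) /\
  (* two (distinct) edges sharing a vertex get different colors *)
  (forall v w w' s, C v w s -> C v w' s -> w = w') /\
  (forall v v' w s, C v w s -> C v' w s -> v = v').

(* Strong edge coloring, in the "equivalently" form of the paper. *)
Definition is_strong_edge_coloring (A B S : Type) (V : A -> Prop) (W : B -> Prop)
  (E : A -> B -> Prop) (Sc : S -> Prop) (C : A -> B -> S -> Prop) : Prop :=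
  is_edge_coloring V W E Sc C /\
  forall v w v' w' s, C v w s -> C v' w' s -> (v, w) <> (v', w') ->
    v <> v' /\ w <> w' /\ ~ E v w' /\ ~ E v' w.

Section Product.
Variables (A1 B1 A2 B2 S : Type).
Variables (V1 : A1 -> Prop) (W1 : B1 -> Prop) (V2 : A2 -> Prop) (W2 : B2 -> Prop).
Variable (Sc : S -> Prop).
Variables (C1 : A1 -> B1 -> S -> Prop) (C2 : A2 -> B2 -> S -> Prop).

Definition prodV : B1 -> Prop := W1.

Definition prodW : A1 * A2 -> Prop := fun p =>
  V1 (fst p) /\ V2 (snd p) /\
  exists y v s, W1 y /\ W2 v /\ Sc s /\ C1 (fst p) y s /\ C2 (snd p) v s.

Definition prodE : B1 -> A1 * A2 -> Prop := fun y p =>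
  prodV y /\ prodW p /\
  exists s v, Sc s /\ W2 v /\ C1 (fst p) y s /\ C2 (snd p) v s.

Definition prodC : B1 -> A1 * A2 -> S * B2 -> Prop := fun y p c =>
  C1 (fst p) y (fst c) /\ C2 (snd p) (snd c) (fst c).

Definition prodSigma : S * B2 -> Prop := fun c =>
  Sc (fst c) /\ W2 (snd c) /\ exists u, V2 u /\ C2 u (snd c) (fst c).
End Product.

From Stdlib Require Import Classical.

Set Implicit Arguments.

(* First,
   for an arbitrary edge coloring, strongness is equivalent to a "no crossing"
   property: if (v,w) and (v',w') have the same colour and (v,w') is an edge,
   then the two coloured edges coincide.  This form is easier to transport.
   Second, for the product construction we check directly that every coloured
   triple is an edge with a colour in Sigma, that the product is bipartite and
   properly edge coloured, and that it has no crossing: a crossing in the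
   product projects, through the first coordinate, to a crossing of the first
   coloring, and the second coordinate is then pinned down by properness of
   the second coloring. *)

Section StrongColorings.
Variables (A B S : Type) (V : A -> Prop) (W : B -> Prop).
Variables (E : A -> B -> Prop) (Sc : S -> Prop) (C : A -> B -> S -> Prop).

Definition no_cross : Prop :=
  forall v w v' w' s, C v w s -> C v' w' s -> E v w' -> v = v' /\ w = w'.

Lemma strong_no_cross :
  is_strong_edge_coloring V W E Sc C -> no_cross.
Proof.
  intros [_ Hstrong] v w v' w' s Hc Hc' Hvw'.
  destruct (classic ((v, w) = (v', w'))) as [Heq | Hne].
  - injection Heq; auto.
  - destruct (Hstrong _ _ _ _ _ Hc Hc' Hne) as [_ [_ [Hnot _]]].
    contradiction.
Qed.

(* Conversely an edge coloring without crossing is strong: each of the four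
   required separations follows from one crossing, since coloured triples
   are edges. *)
Lemma strong_of_no_cross :
  is_edge_coloring V W E Sc C -> no_cross ->
  is_strong_edge_coloring V W E Sc C.
Proof.
  intros Hcol Hnc. split; [exact Hcol|].
  destruct Hcol as [Hedge _].
  intros v w v' w' s Hc Hc' Hne.
  assert (Hsame : v = v' /\ w = w' -> False)
    by (intros [-> ->]; apply Hne; reflexivity).
  split; [|split; [|split]].
  - intros <-. apply Hsame, (Hnc _ _ _ _ _ Hc Hc'), (Hedge _ _ _ Hc').
  - intros <-. apply Hsame, (Hnc _ _ _ _ _ Hc Hc'), (Hedge _ _ _ Hc).
  - intros Hx. apply Hsame, (Hnc _ _ _ _ _ Hc Hc' Hx).
  - intros Hx. destruct (Hnc _ _ _ _ _ Hc' Hc Hx) as [-> ->].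
    apply Hne; reflexivity.
Qed.

End StrongColorings.

Section ProductColoring.
Variables (A1 B1 A2 B2 S : Type).
Variables (V1 : A1 -> Prop) (W1 : B1 -> Prop) (E1 : A1 -> B1 -> Prop).
Variables (V2 : A2 -> Prop) (W2 : B2 -> Prop) (E2 : A2 -> B2 -> Prop).
Variable (Sc : S -> Prop).
Variables (C1 : A1 -> B1 -> S -> Prop) (C2 : A2 -> B2 -> S -> Prop).

Hypothesis bip1 : is_bipartite V1 W1 E1.
Hypothesis bip2 : is_bipartite V2 W2 E2.
Hypothesis col1 : is_edge_coloring V1 W1 E1 Sc C1.
Hypothesis col2 : is_edge_coloring V2 W2 E2 Sc C2.

Notation V := (prodV W1).
Notation W := (prodW V1 W1 V2 W2 Sc C1 C2).
Notation E := (prodE V1 W1 V2 W2 Sc C1 C2).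
Notation Sigma := (prodSigma V2 W2 Sc C2).
Notation C := (prodC C1 C2).

Lemma prodC_edge_color y p c : C y p c -> E y p /\ Sigma c.
Proof.
  destruct p as [x u], c as [s v]. intros [Hc1 Hc2]; simpl in *.
  destruct (proj1 col1 _ _ _ Hc1) as [He1 Hs].
  destruct (proj1 col2 _ _ _ Hc2) as [He2 _].
  destruct (bip1 He1) as [Hx Hy], (bip2 He2) as [Hu Hv].
  split.
  - split; [exact Hy|]. split.
    + split; [exact Hx|]. split; [exact Hu|]. exists y, v, s. tauto.
    + exists s, v. tauto.
  - split; [exact Hs|]. split; [exact Hv|]. exists u. tauto.
Qed.

Lemma prod_bipartite : is_bipartite V W E.
Proof. intros y p [Hy [Hp _]]. split; assumption. Qed.

Lemma prod_edge_coloring : is_edge_coloring V W E Sigma C.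
Proof.
  destruct col1 as [_ [_ [Huniq1 [Hused1 [Hleft1 Hright1]]]]].
  destruct col2 as [_ [_ [_ [_ [Hleft2 Hright2]]]]].
  split; [exact prodC_edge_color|].
  split; [|split; [|split; [|split]]].
  - intros y [x u] [_ [_ [s [v [_ [_ [Hc1 Hc2]]]]]]].
    exists (s, v). split; assumption.
  - intros y [x u] [s v] [s' v'] [Hc1 Hc2] [Hc1' Hc2']; simpl in *.
    assert (s = s') as <- by eauto.
    assert (v = v') as <- by eauto.
    reflexivity.
  - intros [s v] [Hs [_ [u [_ Hc2]]]]; simpl in *.
    destruct (Hused1 s Hs) as [x [y Hc1]].
    exists y, (x, u). split; assumption.
  - intros y [x u] [x' u'] [s v] [Hc1 Hc2] [Hc1' Hc2']; simpl in *.
    assert (x = x') as <- by eauto.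
    assert (u = u') as <- by eauto.
    reflexivity.
  - intros y y' [x u] [s v] [Hc1 _] [Hc1' _]; simpl in *. eauto.
Qed.

(* A crossing in the product gives one in the first factor, which forces the
   first coordinates to agree; properness of C2 then identifies the second. *)
Lemma prod_no_cross : no_cross E1 C1 -> no_cross E C.
Proof.
  intros Hnc1 y [x u] y' [x' u'] [s v] [Hc1 Hc2] [Hc1' Hc2'] Hcross; simpl in *.
  destruct Hcross as [_ [_ [s'' [v'' [_ [_ [Hcx' _]]]]]]]; simpl in Hcx'.
  destruct (Hnc1 _ _ _ _ _ Hc1' Hc1 (proj1 (proj1 col1 _ _ _ Hcx')))
    as [<- <-].
  destruct col2 as [_ [_ [_ [_ [_ Hright2]]]]].
  assert (u = u') as <- by eauto.
  split; reflexivity.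
Qed.

End ProductColoring.

Theorem lemma3p1 (A1 B1 A2 B2 S : Type)
  (V1 : A1 -> Prop) (W1 : B1 -> Prop) (E1 : A1 -> B1 -> Prop)
  (V2 : A2 -> Prop) (W2 : B2 -> Prop) (E2 : A2 -> B2 -> Prop)
  (Sc : S -> Prop)
  (C1 : A1 -> B1 -> S -> Prop) (C2 : A2 -> B2 -> S -> Prop) :
  is_bipartite V1 W1 E1 ->
  is_bipartite V2 W2 E2 ->
  is_strong_edge_coloring V1 W1 E1 Sc C1 ->
  is_strong_edge_coloring V2 W2 E2 Sc C2 ->
  is_bipartite (prodV W1) (prodW V1 W1 V2 W2 Sc C1 C2)
               (prodE V1 W1 V2 W2 Sc C1 C2) /\
  is_strong_edge_coloring (prodV W1) (prodW V1 W1 V2 W2 Sc C1 C2)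
               (prodE V1 W1 V2 W2 Sc C1 C2)
               (prodSigma V2 W2 Sc C2) (prodC C1 C2).
Proof.
  intros bip1 bip2 strong1 strong2.
  split; [apply prod_bipartite|].
  apply strong_of_no_cross.
  - exact (prod_edge_coloring bip1 bip2 (proj1 strong1) (proj1 strong2)).
  - exact (prod_no_cross (proj1 strong1) (proj1 strong2)
             (strong_no_cross strong1)).
Qed.
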